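(* Every $t$-PLS which verifies $\textsc{acyclic}$ requires labels of size $\Omega((\log n)/t)$, where $n$ is the number of vertices.
   Context: $\textsc{acyclic}$ is the predicate on the family of all connected graph configurations (graph $G=(V,E)$ with state assignment $\varphi:V\to S$) that is true iff the underlying graph is cycle free. A $t$-round proof-labeling scheme ($t$-PLS) consists of a prover assigning a bit string (label) to each vertex and a deterministic distributed verifier running $t$ synchronous rounds (in each round every vertex receives messages from all neighbors, computes, and sends messages), after which each vertex outputs true or false; it must be complete (acyclic configurations are accepted, i.e. all vertices output true, with the prover's labels) and sound (configurations with a cycle are rejected by some vertex under every labeling). Vertices may have unique identifiers and labels may depend on them. Label size is the maximum label length assigned by the prover on legal configurations. *)

From mathcomp Require Import all_boot.


Record config (S : Type) := Config {
  nv : nat;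
  adj : rel 'I_nv;
  state : 'I_nv -> S;
  ident : 'I_nv -> nat }.
Arguments nv {S} c.
Arguments adj {S} c _ _.
Arguments state {S} c _.
Arguments ident {S} c _.

Definition well_formed {S} (G : config S) : Prop :=
  [/\ 0 < nv G, symmetric (adj G), irreflexive (adj G),
      injective (ident G) & forall u v, connect (adj G) u v].

Definition has_cycle {S} (G : config S) : Prop :=
  exists p : seq 'I_(nv G), [/\ 3 <= size p, uniq p & cycle (adj G) p].

Definition acyclic {S} (G : config S) : Prop := ~ has_cycle G.

Definition labeling {S} (G : config S) := 'I_(nv G) -> seq bool.

(* the prover: assigns labels to every configuration (only used on legal ones) *)
Definition prover (S : Type) := forall G : config S, labeling G.

(* a deterministic synchronous distributed algorithm (LOCAL model):
   local state type vQ, message type vM; initial state from own id, own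
   state and own label; each round every vertex sends a message to all its
   neighbours, receives the messages of all neighbours (listed in increasing
   order of sender identifier) and updates; finally outputs a boolean. *)
Record verifier (S : Type) := Verifier {
  vQ : Type;
  vM : Type;
  vinit : nat -> S -> seq bool -> vQ;
  vsend : vQ -> vM;
  vupdate : vQ -> seq vM -> vQ;
  vout : vQ -> bool }.
Arguments vQ {S} v.
Arguments vM {S} v.
Arguments vinit {S} v _ _ _.
Arguments vsend {S} v _.
Arguments vupdate {S} v _ _.
Arguments vout {S} v _.

Definition nbrs {S} (G : config S) (v : 'I_(nv G)) : seq 'I_(nv G) :=
  sort (fun u w => ident G u <= ident G w) [seq u <- enum 'I_(nv G) | adj G v u].

Fixpoint run {S} (A : verifier S) (G : config S) (lab : labeling G) (k : nat)
  : 'I_(nv G) -> vQ A :=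
  match k with
  | 0 => fun v => vinit A (ident G v) (state G v) (lab v)
  | k'.+1 => fun v => vupdate A (run A G lab k' v)
                        [seq vsend A (run A G lab k' u) | u <- nbrs G v]
  end.

Definition output {S} (A : verifier S) (G : config S) (lab : labeling G) (t : nat)
  (v : 'I_(nv G)) : bool := vout A (run A G lab t v).

Definition tPLS_acyclic {S} (t : nat) (P : prover S) (A : verifier S) : Prop :=
  (forall G : config S, well_formed G -> acyclic G ->
     forall v, output A G (P G) t v) /\
  (forall G : config S, well_formed G -> has_cycle G ->
     forall lab : labeling G, exists v, ~~ output A G lab t v).

From mathcomp Require Import all_boot zify.
From Stdlib Require Import Classical ClassicalEpsilon.

Set Implicit Arguments.
Unset Strict Implicit.
Unset Printing Implicit Defensive.

(* Suppose every label of every legal n-vertex configuration has at most L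
   bits.  Cut a path on n vertices into r blocks of 4t vertices: the first
   half of each block keeps identifiers equal to positions, the second half
   of block z gets fresh identifiers chosen by the z-th entry of a sequence
   s.  By the infinite Ramsey theorem there is an infinite set of naturals
   such that the prover labels the path the same way for every increasing
   r-tuple s from that set.  If r exceeds the number of possible labelings
   of a half-block, two blocks i < j carry the same labels on their second
   halves.  Take s starting at the (j - i)-th element of the set and close
   the segment from the second half of block i to the end of the first half
   of block j into a cycle.  Every t-ball of that cycle is labeled and
   identified exactly like a t-ball of a legal path: of the path itself
   away from the seam, and across the seam of the path built from the
   first r elements of the set, whose block j carries the identifiers of
   block i.  So the verifier accepts a configuration with a cycle, which
   contradicts soundness; counting half-block labelings gives
   L >= log n / (8t). *)

Definition path_adj n : rel 'I_n :=
  fun u v => (u.+1 == v :> nat) || (v.+1 == u :> nat).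

Definition cycle_adj n : rel 'I_n := fun u v => (ordS u == v) || (ordS v == u).

Definition path_config S n (st : 'I_n -> S) (id : 'I_n -> nat) : config S :=
  @Config S n (@path_adj n) st id.

Definition cycle_config S n (st : 'I_n -> S) (id : 'I_n -> nat) : config S :=
  @Config S n (@cycle_adj n) st id.

Lemma path_adj_sym n : symmetric (@path_adj n).
Proof. by move=> u v; rewrite /path_adj orbC. Qed.

Lemma cycle_adj_sym n : symmetric (@cycle_adj n).
Proof. by move=> u v; rewrite /cycle_adj orbC. Qed.

Lemma val_ordS n (u : 'I_n) : ordS u = (if u.+1 == n then 0 else u.+1) :> nat.
Proof.
rewrite /=; case: eqP => [->|/eqP ne]; first by rewrite modnn.
by rewrite modn_small // ltn_neqAle ne ltn_ord.
Qed.

Lemma connect_succ n (e : rel 'I_n) : symmetric e ->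
  (forall u v : 'I_n, u.+1 = v :> nat -> e u v) -> forall u v, connect e u v.
Proof.
move=> e_sym e_succ.
suff up k (u v : 'I_n) : val v = u + k -> connect e u v.
  move=> u v; case: (leqP u v) => [le_uv|/ltnW le_vu].
    by apply: (up (v - u)); rewrite subnKC.
  by rewrite (sym_connect_sym e_sym); apply: (up (u - v)); rewrite subnKC.
elim: k v => [|k IHk] v Ev; first by rewrite addn0 in Ev; rewrite (val_inj Ev) connect0.
have lt_w : u + k < n by rewrite (leq_trans _ (ltn_ord v)) // Ev addnS.
apply: connect_trans (IHk (Ordinal lt_w) erefl) (connect1 _).
by apply: e_succ; rewrite Ev addnS.
Qed.

Lemma path_config_wf S n st id : 0 < n -> injective id ->
  well_formed (@path_config S n st id).
Proof.
move=> n_gt0 id_inj; split => //; first exact: path_adj_sym.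
  by move=> u; rewrite /= /path_adj !gtn_eqF.
apply: connect_succ; first exact: path_adj_sym.
by move=> u v Euv; rewrite /= /path_adj Euv eqxx.
Qed.

Lemma cycle_config_wf S n st id : 1 < n -> injective id ->
  well_formed (@cycle_config S n st id).
Proof.
move=> n_gt1 id_inj; split => //; first exact: ltnW.
- exact: cycle_adj_sym.
- move=> u; rewrite /= /cycle_adj orbb; apply/negbTE/eqP.
  by move/(congr1 (@nat_of_ord n)); rewrite val_ordS; case: eqP; lia.
apply: connect_succ; first exact: cycle_adj_sym.
move=> u v Euv; apply/orP; left; apply/eqP/ord_inj.
by rewrite val_ordS Euv ltn_eqF.
Qed.

Lemma path_config_acyclic S n st id : acyclic (@path_config S n st id).
Proof.
move=> [[|y q] [size_p uniq_p cycle_p]] //; set p := y :: q in size_p uniq_p cycle_p.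
case: (@arg_maxnP _ y (mem p) (fun i => nat_of_ord i) (mem_head y q)) => x p_x x_max.
have below z : z \in p -> path_adj x z -> z.+1 = x :> nat.
  by move=> p_z; rewrite /path_adj; case: eqP => [Exz _|_ /eqP //]; have := x_max z p_z; lia.
have next_x : (next p x).+1 = x :> nat.
  by apply: below; [rewrite mem_next | exact: next_cycle cycle_p p_x].
have prev_x : (prev p x).+1 = x :> nat.
  apply: below; first by rewrite mem_prev.
  by rewrite path_adj_sym; exact: prev_cycle cycle_p p_x.
have next_next : next p (next p x) = x.
  have -> : next p x = prev p x by apply: ord_inj; apply: succn_inj; rewrite next_x.
  exact: next_prev.
have two_cycle : fcycle (next p) [:: x; next p x].
  by move: (next p) next_next => f ffx; rewrite /= ffx !eqxx.
have : order (next p) x <= 2 := order_le_cycle two_cycle (mem_head _ _).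
by rewrite (order_cycle (cycle_next uniq_p) uniq_p p_x) leqNgt size_p.
Qed.

Lemma path_iota_succ i m : path (fun a b => b == a.+1) i (iota i.+1 m).
Proof. by elim: m i => //= m IHm i; rewrite eqxx IHm. Qed.

Lemma cycle_config_has_cycle S n st id : 2 < n -> has_cycle (@cycle_config S n st id).
Proof.
move=> n_gt2; exists (enum 'I_n); split; rewrite ?size_enum_ord ?enum_uniq //.
apply: (@sub_cycle _ (fun u v => v == ordS u)) => [u v /eqP-> | ].
  by rewrite /= /cycle_adj eqxx.
have succ_mod : (fun u v : 'I_n => v == ordS u) =2 relpre val (fun a b => b == a.+1 %% n).
  by move=> u v; rewrite /relpre -val_eqE.
rewrite (eq_cycle succ_mod) -cycle_map val_enum_ord.
case: n n_gt2 {st id succ_mod} => // m m_gt1 /=; rewrite rcons_path.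
have last_iota i k : last i (iota i.+1 k) = i + k.
  by elim: k i => [|k IHk] i /=; rewrite ?addn0 // IHk addnS.
rewrite last_iota add0n modnn eqxx andbT.
apply: (@sub_in_path _ (gtn m.+1) _ _ _ _ _ _ (path_iota_succ 0 m)).
  by move=> a b _ lt_b /eqP Eb; rewrite modn_small -Eb.
by apply/allP => a; rewrite inE mem_iota add1n; case/predU1P => [->|/andP[_]].
Qed.

Lemma nbrs_map S (G1 G2 : config S) (f : 'I_(nv G1) -> 'I_(nv G2)) v :
  injective (ident G1) -> injective (ident G2) ->
  (forall u, adj G1 v u -> adj G2 (f v) (f u) /\ ident G2 (f u) = ident G1 u) ->
  (forall u2, adj G2 (f v) u2 -> exists2 u, adj G1 v u & f u = u2) ->
  nbrs G2 (f v) = map f (nbrs G1 v).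
Proof.
move=> id1_inj id2_inj f_adj f_onto.
pose le_id (G : config S) := fun u w : 'I_(nv G) => ident G u <= ident G w.
have le_tr G : transitive (le_id G) by move=> ? ? ? /leq_trans; apply.
have le_total G : total (le_id G) by move=> ? ?; apply: leq_total.
have nbr_adj u : u \in nbrs G1 v -> adj G1 v u.
  by rewrite mem_sort mem_filter => /andP[].
have f_id u : u \in nbrs G1 v -> ident G2 (f u) = ident G1 u.
  by move/nbr_adj/f_adj => [].
apply: (@sorted_eq _ (le_id G2) (le_tr G2)).
- by move=> x y /andP[xy yx]; apply: id2_inj; apply/eqP; rewrite eqn_leq; apply/andP.
- exact: sort_sorted (le_total G2) _.
- rewrite sorted_map.
  apply: (sub_in_sorted (P := mem (nbrs G1 v))) (sort_sorted (le_total G1) _).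
    by move=> x y x_nb y_nb; rewrite /le_id /= !f_id.
  exact/allP.
apply: uniq_perm.
- by rewrite sort_uniq filter_uniq ?enum_uniq.
- rewrite map_inj_in_uniq; first by rewrite sort_uniq filter_uniq ?enum_uniq.
  by move=> x y x_nb y_nb Efxy; apply: id1_inj; rewrite -(f_id x x_nb) -(f_id y y_nb) Efxy.
move=> u2; rewrite mem_sort mem_filter mem_enum andbT; apply/idP/mapP.
  by case/f_onto=> u vu <-; exists u; rewrite // mem_sort mem_filter mem_enum vu.
by case=> u /nbr_adj /f_adj [] ? _ ->.
Qed.

Lemma run_local S (A : verifier S) (G1 G2 : config S) (l1 : labeling G1)
    (l2 : labeling G2) (f : 'I_(nv G1) -> 'I_(nv G2)) (R : nat -> 'I_(nv G1) -> Prop) :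
  (forall v, R 0 v ->
     [/\ ident G1 v = ident G2 (f v), state G1 v = state G2 (f v) & l1 v = l2 (f v)]) ->
  (forall k v, R k.+1 v ->
     [/\ R k v, forall u, adj G1 v u -> R k u & nbrs G2 (f v) = map f (nbrs G1 v)]) ->
  forall k v, R k v -> run A G1 l1 k v = run A G2 l2 k (f v).
Proof.
move=> R0 RS; elim=> [|k IHk] v /=; first by case/R0=> -> -> ->.
case/RS=> Rkv Rk_adj ->; rewrite IHk // -map_comp; congr vupdate.
apply/eq_in_map => u; rewrite mem_sort mem_filter => /andP[vu _] /=.
by rewrite IHk //; apply: Rk_adj.
Qed.

(* The position of w on the path obtained by cutting the cycle on n vertices
   just before vertex c. *)
Definition cycle_offset n c (w : nat) := (w + (n - c)) %% n.

Lemma cycle_offsetE n c w : c < n -> w < n ->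
  cycle_offset n c w = if c <= w then w - c else w + n - c.
Proof.
move=> c_lt w_lt; rewrite /cycle_offset; case: (leqP c w) => c_w.
  by rewrite addnBA 1?ltnW // addnC -addnBA // modnDl modn_small //; lia.
by rewrite modn_small; lia.
Qed.

Lemma cycle_offsetS n c (w : 'I_n) :
  cycle_offset n c (ordS w) = (cycle_offset n c w).+1 %% n.
Proof. by rewrite /cycle_offset /= modnDml -[(_ %% n).+1]addn1 modnDml addn1 addSn. Qed.

Section CycleSegment.

Variables (S : Type) (A : verifier S) (M N : nat).
Variables (stZ : 'I_M -> S) (idZ : 'I_M -> nat) (stG : 'I_N.+1 -> S) (idG : 'I_N.+1 -> nat).
Hypotheses (idZ_inj : injective idZ) (idG_inj : injective idG).
Variables (labZ : labeling (cycle_config stZ idZ)) (labG : labeling (path_config stG idG)).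
Variables (cut base lo hi : nat).
Hypotheses (hi_lt : hi < M) (base_le : base + M <= N.+1).

Local Notation offset w := (cycle_offset M cut w).

Let unroll (w : 'I_M) : 'I_N.+1 := inord (base + offset w).

Hypothesis unroll_matches : forall w : 'I_M, lo <= offset w <= hi ->
  [/\ idZ w = idG (unroll w), stZ w = stG (unroll w) & labZ w = labG (unroll w)].

Let val_unroll (w : 'I_M) : unroll w = base + offset w :> nat.
Proof.
rewrite inordK // (leq_trans _ base_le) // ltn_add2l ltn_pmod //.
exact: leq_ltn_trans (leq0n _) (ltn_ord w).
Qed.

Let offset_ordS (w : 'I_M) : offset w < hi -> offset (ordS w) = (offset w).+1.
Proof. by move=> lt_hi; rewrite cycle_offsetS modn_small // (leq_ltn_trans lt_hi). Qed.

Let offset_ordS_pos (w : 'I_M) : 0 < offset (ordS w) -> offset (ordS w) = (offset w).+1.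
Proof.
rewrite cycle_offsetS; have : offset w < M by apply/ltn_pmod/(leq_ltn_trans _ (ltn_ord w)).
by rewrite leq_eqVlt => /orP[/eqP->|lt_M]; rewrite ?modnn ?modn_small.
Qed.

Let offset_adj (v u : 'I_M) : 0 < offset v -> offset v < hi -> cycle_adj v u ->
  offset u = (offset v).+1 \/ offset v = (offset u).+1.
Proof.
move=> v_gt0 v_hi /orP[/eqP Ev|/eqP Ev]; first by left; rewrite -Ev offset_ordS.
by right; subst v; rewrite offset_ordS_pos.
Qed.

Lemma nbrs_unroll (v : 'I_M) : lo < offset v < hi ->
  nbrs (path_config stG idG) (unroll v) = map unroll (nbrs (cycle_config stZ idZ) v).
Proof.
move=> /andP[lo_v v_hi]; have v_gt0 : 0 < offset v := leq_ltn_trans (leq0n lo) lo_v.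
have offset_v : offset v = (offset (ord_pred v)).+1.
  by rewrite -{1}(ord_predK v) offset_ordS_pos // ord_predK.
apply: (@nbrs_map S (cycle_config stZ idZ) (path_config stG idG)) => //= [u vu | u2].
  have off_u := offset_adj v_gt0 v_hi vu.
  split; first by rewrite /path_adj !val_unroll; case: off_u => ->; rewrite addnS eqxx ?orbT.
  have : lo <= offset u <= hi by case: off_u; lia.
  by case/unroll_matches.
rewrite /path_adj val_unroll => /orP[/eqP E|/eqP E].
  exists (ordS v); first by rewrite /cycle_adj eqxx.
  by apply: ord_inj; rewrite val_unroll offset_ordS // -E addnS.
exists (ord_pred v); first by rewrite /cycle_adj ord_predK eqxx orbT.
by apply: ord_inj; apply: succn_inj; rewrite val_unroll E offset_v addnS.
Qed.

Lemma run_unroll k (v : 'I_M) : lo + k <= offset v -> offset v + k <= hi ->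
  run A (cycle_config stZ idZ) labZ k v = run A (path_config stG idG) labG k (unroll v).
Proof.
pose R k (w : 'I_M) := lo + k <= offset w /\ offset w + k <= hi.
move=> lo_v v_hi.
apply: (@run_local S A _ _ labZ labG unroll R) => [w [lo_w w_hi]|j w [lo_w w_hi]|].
- by rewrite !addn0 in lo_w w_hi; apply: unroll_matches; rewrite lo_w.
- have w_gt0 : 0 < offset w by apply: leq_trans lo_w; rewrite addnS.
  have w_lt : offset w < hi by apply: leq_trans w_hi; rewrite addnS ltnS leq_addr.
  split; first by rewrite /R; lia.
    by move=> u /(offset_adj w_gt0 w_lt) off_u; rewrite /R; case: off_u; lia.
  apply: nbrs_unroll; rewrite w_lt andbT; apply: leq_trans lo_w.
  by rewrite addnS ltnS leq_addr.
by rewrite /R.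
Qed.

End CycleSegment.

Lemma infinite_pigeonhole (C : finType) (col : nat -> C) :
  exists c, forall N, exists2 k, N <= k & col k = c.
Proof.
apply: NNPP => no_c.
have bound c : exists N, forall k, N <= k -> col k <> c.
  apply: NNPP => no_N; apply: no_c; exists c => N; apply: NNPP => no_k.
  by apply: no_N; exists N => k le_Nk col_k; apply: no_k; exists k.
have [N N_bound] := choice (fun c N => forall k, N <= k -> col k <> c) bound.
exact: N_bound _ _ (leq_bigmax (col (\max_(c : C) N c))) erefl.
Qed.

Lemma increasing_enumeration (P : nat -> Prop) :
  (forall N, exists2 k, N <= k & P k) ->
  exists2 e : nat -> nat, {homo e : a b / a < b} & forall a, P (e a).
Proof.
move=> P_unbounded.
have [next next_spec] : exists next : nat -> nat, forall N, N <= next N /\ P (next N).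
  by apply: (choice (fun N k => N <= k /\ P k)) => N; have [k] := P_unbounded N; exists k.
exists (fun a => iter a.+1 (fun m => next m.+1) 0).
  by apply: homo_ltn => [? ? ? /ltn_trans|a]; [apply | apply: (next_spec _).1].
by case=> [|a]; apply: (next_spec _).2.
Qed.

Definition homogeneous (C : Type) (col : seq nat -> C) r (h : nat -> nat) c :=
  forall s, size s = r -> sorted ltn s -> col (map h s) = c.

Section RamseyStep.

Variables (C : finType) (r : nat) (col : seq nat -> C).
Hypothesis ramsey_r : forall col' : seq nat -> C,
  exists2 h, {homo h : a b / a < b} & exists c, homogeneous col' r h c.

Lemma ramsey_diagonal : exists2 x : nat -> nat, {homo x : a b / a < b} &
  exists cc : nat -> C, forall k ks, size ks = r -> sorted ltn ks ->
    all (ltn k) ks -> col (x k :: map x ks) = cc k.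
Proof.
pose shifted g s := col (g 0 :: map (fun a => g a.+1) s).
have [sel sel_spec] : exists sel : (nat -> nat) -> (nat -> nat) * C, forall g,
    {homo (sel g).1 : a b / a < b} /\ homogeneous (shifted g) r (sel g).1 (sel g).2.
  apply: (choice (fun g hc =>
    {homo hc.1 : a b / a < b} /\ homogeneous (shifted g) r hc.1 hc.2)).
  by move=> g; have [h h_incr [c h_c]] := ramsey_r (shifted g); exists (h, c).
(* gs k.+1 enumerates a subsequence of gs k lying beyond gs k 0 on which
   every r-set, prefixed with gs k 0, has the colour (sel (gs k)).2. *)
pose thin g a := g ((sel g).1 a).+1.
pose gs k := iter k thin id.
have gs_incr k : {homo gs k : a b / a < b}.
  elim: k => [//|k IHk] a b lt_ab; apply: IHk; rewrite ltnS; exact: (sel_spec _).1.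
have x_incr : {homo (fun k => gs k 0) : a b / a < b}.
  by apply: homo_ltn => [? ? ? /ltn_trans|k]; [apply | apply: gs_incr].
exists (fun k => gs k 0) => //.
exists (fun k => (sel (gs k)).2) => k ks size_ks sorted_ks ks_gt.
have gs_range m a : exists b, gs (m + k.+1) a = gs k.+1 b.
  elim: m a => [|m IHm] a; first by exists a.
  by have [b Eb] := IHm ((sel (gs (m + k.+1))).1 a).+1; exists b.
have [idx idx_spec] : exists idx, forall k', k < k' -> gs k' 0 = gs k.+1 (idx k').
  apply: (choice (fun k' b => k < k' -> gs k' 0 = gs k.+1 b)) => k'.
  case: (ltnP k k') => [lt_kk'|]; last by exists 0.
  by have [b Eb] := gs_range (k' - k.+1) 0; exists b; rewrite -Eb subnK.
have -> : map (fun k => gs k 0) ks = map (gs k.+1) (map idx ks).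
  by rewrite -map_comp; apply/eq_in_map => k' /(allP ks_gt) /idx_spec.
rewrite -[map (gs k.+1) _]/(map ((fun a => gs k a.+1) \o (sel (gs k)).1) _) map_comp.
apply: (sel_spec (gs k)).2; rewrite ?size_map // sorted_map.
apply: (@sub_in_sorted _ (ltn k)) ks_gt sorted_ks => k1 k2 k_k1 k_k2 lt_k12 /=.
by rewrite -(leqW_mono (leq_mono (gs_incr k.+1))) -!idx_spec //; apply: x_incr.
Qed.

End RamseyStep.

Theorem ramsey (C : finType) r (col : seq nat -> C) :
  exists2 h, {homo h : a b / a < b} & exists c, homogeneous col r h c.
Proof.
elim: r col => [|r IHr] col.
  by exists id => // ; exists (col [::]); case.
have [x x_incr [cc x_cc]] := ramsey_diagonal col IHr.
have [c c_often] := infinite_pigeonhole cc.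
have [e e_incr e_c] := increasing_enumeration c_often.
exists (x \o e) => [a b lt_ab|]; first by apply/x_incr/e_incr.
exists c => -[//|a s] [size_s] /= sorted_s; rewrite -(e_c a) map_comp.
apply: x_cc; rewrite ?size_map //.
  by rewrite sorted_map; apply: sub_sorted (path_sorted sorted_s) => ? ?; apply: e_incr.
rewrite all_map; apply/allP => b s_b /=; apply: e_incr.
exact: (allP (order_path_min ltn_trans sorted_s)).
Qed.

(* Block z occupies the positions [4tz, 4tz + 4t); its first half keeps
   identifiers equal to positions, its second half gets fresh identifiers
   above n indexed by the z-th entry of s. *)
Definition block_ident (n t r : nat) (s : seq nat) (k : nat) : nat :=
  if (k < 4 * t * r) && (2 * t <= k %% (4 * t))
  then n + nth 0 s (k %/ (4 * t)) * (2 * t) + (k %% (4 * t) - 2 * t) else k.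

Lemma block_ident_slot n t r s z o : 0 < t -> z < r -> o < 2 * t ->
  block_ident n t r s (4 * t * z + 2 * t + o) = n + nth 0 s z * (2 * t) + o.
Proof.
move=> t_gt0 z_lt o_lt; rewrite /block_ident -addnA mulnC modnMDl divnMDl ?muln_gt0 //.
rewrite modn_small ?divn_small ?addn0 ?leq_addr; try lia.
have : z.+1 * (4 * t) <= r * (4 * t) by rewrite leq_pmul2r ?muln_gt0.
rewrite mulSn => zr; rewrite ifT; first by congr (_ + _); lia.
rewrite mulnC in zr; lia.
Qed.

Lemma block_ident_fill n t r s z e : 0 < t -> e < 2 * t ->
  block_ident n t r s (4 * t * z + e) = 4 * t * z + e.
Proof.
move=> t_gt0 e_lt; rewrite /block_ident mulnC modnMDl modn_small; last by lia.
by rewrite [2 * t <= e]leqNgt e_lt andbF.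
Qed.

Lemma block_ident_inj n t r s : 0 < t -> 4 * t * r <= n ->
  {in gtn r &, injective (nth 0 s)} -> {in gtn n &, injective (block_ident n t r s)}.
Proof.
move=> t_gt0 blocks_fit s_inj k1 k2 /[!inE] k1_lt k2_lt; rewrite /block_ident.
have e1_lt : k1 %% (4 * t) < 4 * t by rewrite ltn_pmod ?muln_gt0.
have e2_lt : k2 %% (4 * t) < 4 * t by rewrite ltn_pmod ?muln_gt0.
case: ifP => [/andP[k1_r slot1]|_]; case: ifP => [/andP[k2_r slot2]|_]; try lia.
set x1 := k1 %% (4 * t) - 2 * t; set x2 := k2 %% (4 * t) - 2 * t.
set q1 := k1 %/ (4 * t); set q2 := k2 %/ (4 * t).
have q_lt k : k < 4 * t * r -> k %/ (4 * t) < r by rewrite ltn_divLR ?muln_gt0 // mulnC.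
move=> E; have {}E : nth 0 s q1 * (2 * t) + x1 = nth 0 s q2 * (2 * t) + x2 by lia.
have x_lt : x1 < 2 * t /\ x2 < 2 * t by rewrite /x1 /x2; lia.
have Es : nth 0 s q1 = nth 0 s q2.
  move/(congr1 (divn^~ (2 * t))): E.
  by rewrite !divnMDl ?muln_gt0 // !divn_small ?addn0; try lia.
have Ex : x1 = x2.
  by move/(congr1 (modn^~ (2 * t))): E; rewrite !modnMDl !modn_small //; lia.
have Eq : q1 = q2 by apply: s_inj; rewrite ?inE ?q_lt.
by rewrite (divn_eq k1 (4 * t)) (divn_eq k2 (4 * t)) -/q1 -/q2 Eq; lia.
Qed.

Section LowerBound.

Variables (S : Type) (s0 : S) (t : nat) (P : prover S) (A : verifier S).
Arguments P : clear implicits.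
Hypotheses (t_gt0 : 0 < t) (PA : tPLS_acyclic t P A).
Variables (n L r : nat).
Hypotheses (signatures_lt : #|{ffun 'I_(2 * t) -> {bseq L of bool}}| < r)
  (blocks_fit : 4 * t * r <= n.+1).
Hypothesis short_labels : forall G : config S,
  nv G = n.+1 -> well_formed G -> acyclic G -> forall v, size (P G v) <= L.

Let blocks s := path_config (fun _ : 'I_n.+1 => s0) (fun k => block_ident n.+1 t r s k).

Let blocks_inj (h : nat -> nat) a : {homo h : a b / a < b} ->
  {in gtn n.+1 &, injective (block_ident n.+1 t r (map h (iota a r)))}.
Proof.
move=> h_incr; apply: block_ident_inj => // z1 z2 /[!inE] z1_lt z2_lt.
rewrite !(nth_map 0) ?size_iota // !nth_iota // => /(incn_inj (leq_mono h_incr)).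
exact: addnI.
Qed.

Let blocks_legal (h : nat -> nat) a : {homo h : a b / a < b} ->
  well_formed (blocks (map h (iota a r))) /\ acyclic (blocks (map h (iota a r))).
Proof.
move=> h_incr; split; last exact: path_config_acyclic.
apply: path_config_wf => // k1 k2 E.
by apply: ord_inj; apply: (blocks_inj h_incr) E; exact: ltn_ord.
Qed.

Lemma homogeneous_labels : exists2 h : nat -> nat, {homo h : a b / a < b} &
  exists c : {ffun 'I_n.+1 -> {bseq L of bool}},
    forall a k, P (blocks (map h (iota a r))) k = c k.
Proof.
pose col s : {ffun 'I_n.+1 -> {bseq L of bool}} := [ffun k => insub_bseq L (P (blocks s) k)].
have [h h_incr [c h_c]] := ramsey r col.
exists h => //; exists c => a k.
have [wf ac] := blocks_legal a h_incr.
rewrite -(h_c (iota a r)) ?size_iota ?iota_ltn_sorted // ffunE /insub_bseq insubdK //.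
exact: short_labels.
Qed.

Lemma equal_signatures (c : {ffun 'I_n.+1 -> {bseq L of bool}}) :
  exists i j, i < j < r /\ forall o, o < 2 * t ->
    c (inord (4 * t * i + 2 * t + o)) = c (inord (4 * t * j + 2 * t + o)).
Proof.
pose sig (z : 'I_r) := [ffun o : 'I_(2 * t) => c (inord (4 * t * z + 2 * t + o))].
have /injectivePn [z1 [z2 neq_z sig_z]] : ~~ injectiveb sig.
  by apply/injectiveP => /leq_card; rewrite card_ord leqNgt signatures_lt.
have sig_eq o : o < 2 * t ->
    c (inord (4 * t * z1 + 2 * t + o)) = c (inord (4 * t * z2 + 2 * t + o)).
  move=> o_lt; have := congr1 (fun f : {ffun _ -> _} => f (Ordinal o_lt)) sig_z.
  by rewrite !ffunE.
case: (ltngtP z1 z2) => [lt12|lt21|/val_inj eq12]; last by rewrite eq12 eqxx in neq_z.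
  by exists z1, z2; rewrite lt12 ltn_ord.
by exists z2, z1; rewrite lt21 ltn_ord; split => // o /sig_eq.
Qed.

Section Gluing.

Variables (h : nat -> nat) (c : {ffun 'I_n.+1 -> {bseq L of bool}}) (i j : nat).
Hypotheses (h_incr : {homo h : a b / a < b})
  (h_c : forall a k, P (blocks (map h (iota a r))) k = c k).
Hypotheses (lt_ij : i < j) (lt_jr : j < r).
Hypothesis same_sig : forall o, o < 2 * t ->
  c (inord (4 * t * i + 2 * t + o)) = c (inord (4 * t * j + 2 * t + o)).

Let d := j - i.
Let M := 4 * t * d.
Let start := 4 * t * i + 2 * t.
Let sX := map h (iota d r).
Let idZ (w : 'I_M) := block_ident n.+1 t r sX (start + w).
Let Z := cycle_config (fun _ : 'I_M => s0) idZ.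
Let mu : labeling Z := fun w => P (blocks sX) (inord (start + w)).

Let block_j_start : 4 * t * j = 4 * t * i + M.
Proof. by rewrite /M -mulnDr subnKC // ltnW. Qed.

Let block_j_fit : 4 * t * j + 4 * t <= n.+1.
Proof. by apply: leq_trans blocks_fit; rewrite addnC -mulnS leq_mul2l lt_jr orbT. Qed.

Let M_ge : 4 * t <= M.
Proof. by rewrite leq_pmulr // subn_gt0. Qed.

Let M_gt0 : 0 < M.
Proof. by apply: leq_trans M_ge; rewrite muln_gt0. Qed.

Let val_inord x : x < 4 * t * j + 4 * t -> (inord x : 'I_n.+1) = x :> nat.
Proof. by move=> x_lt; rewrite inordK // (leq_trans x_lt). Qed.

Let idZ_inj : injective idZ.
Proof.
move=> w1 w2 /blocks_inj; rewrite !inE => /(_ h_incr) E.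
apply: ord_inj; have := ltn_ord w1; have := ltn_ord w2; move: E; lia.
Qed.

Let accepts_by_unroll a cut base lo hi (v : 'I_M) :
  hi < M -> base + M <= 4 * t * j + 4 * t ->
  (forall w : 'I_M, lo <= cycle_offset M cut w <= hi ->
     idZ w = block_ident n.+1 t r (map h (iota a r)) (base + cycle_offset M cut w)
     /\ mu w = P (blocks (map h (iota a r))) (inord (base + cycle_offset M cut w))) ->
  lo + t <= cycle_offset M cut v -> cycle_offset M cut v + t <= hi -> output A Z mu t v.
Proof.
move=> hi_lt base_le matches lo_v v_hi; have [wf ac] := blocks_legal a h_incr.
have idG_inj : injective (fun k : 'I_n.+1 => block_ident n.+1 t r (map h (iota a r)) k).
  by move=> k1 k2 E; apply: ord_inj; apply: (blocks_inj h_incr) E; exact: ltn_ord.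
rewrite /output (run_unroll A idZ_inj idG_inj (labG := P (blocks (map h (iota a r))))
  hi_lt (leq_trans base_le block_j_fit) _ lo_v v_hi); first exact: PA.1.
move=> w /matches [-> ->]; split=> //=; rewrite val_inord //.
by apply: leq_trans base_le; rewrite ltn_add2l ltn_pmod.
Qed.

Let interior_accepts (v : 'I_M) : t <= v -> v + t < M -> output A Z mu t v.
Proof.
have offset_id (w : 'I_M) : cycle_offset M 0 w = w by rewrite cycle_offsetE ?subn0.
move=> t_v v_t; apply: (@accepts_by_unroll d 0 start 0 M.-1); rewrite ?offset_id.
- by rewrite prednK.
- by move: block_j_start; rewrite /start; lia.
- by move=> w _; rewrite offset_id.
- by [].
- lia.
Qed.

Let nth_blocks a z : z < r -> nth 0 (map h (iota a r)) z = h (a + z).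
Proof. by move=> z_lt; rewrite (nth_map 0) ?size_iota // nth_iota. Qed.

(* Across the seam, Z looks like blocks (map h (iota 0 r)), whose block j
   carries the identifiers of block i of blocks sX. *)
Let seam_accepts (v : 'I_M) : ~~ ((t <= v) && (v + t < M)) -> output A Z mu t v.
Proof.
have cut_lt : 2 * t < M by apply: leq_trans M_ge; lia.
have offsetE (w : 'I_M) :
    cycle_offset M (2 * t) w = if 2 * t <= w then w - 2 * t else w + M - 2 * t.
  exact: cycle_offsetE.
move=> v_seam; apply: (@accepts_by_unroll 0 (2 * t) (start + 2 * t) (M - 4 * t) M.-1).
- by rewrite prednK.
- by move: block_j_start; rewrite /start; lia.
- move=> w; rewrite offsetE; have w_lt := ltn_ord w.
  case: (leqP (2 * t) w) => [w_ge|w_lt2] /andP[w_range _].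
    have pos_w : start + 2 * t + (w - 2 * t) = 4 * t * j + (w + 2 * t - M).
      by move: block_j_start w_range; rewrite /start; lia.
    have pos_w' : start + w = 4 * t * j + (w + 2 * t - M) by move: pos_w; lia.
    rewrite /idZ /mu pos_w pos_w' !block_ident_fill //; try lia.
    by rewrite !h_c.
  have pos_w : start + 2 * t + (w + M - 2 * t) = 4 * t * j + 2 * t + w.
    by move: block_j_start w_range; rewrite /start; lia.
  have lt_ir := ltn_trans lt_ij lt_jr.
  rewrite /idZ /mu pos_w /start !block_ident_slot // !nth_blocks //.
  rewrite add0n subnK ?(ltnW lt_ij) //.
  by rewrite !h_c same_sig.
all: have := ltn_ord v; move: v_seam; rewrite offsetE negb_and -ltnNge -leqNgt.
all: by case: (leqP (2 * t) v) => v_2t /orP; lia.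
Qed.

Lemma glued_cycle_contradiction : False.
Proof.
have M_gt2 : 2 < M by apply: leq_trans M_ge; lia.
have Z_wf := cycle_config_wf (fun _ => s0) (ltnW M_gt2) idZ_inj.
have [v] := PA.2 Z Z_wf (cycle_config_has_cycle _ _ M_gt2) mu.
apply/negP/negPn; case: (boolP ((t <= v) && (v + t < M))) => [/andP[]|].
  exact: interior_accepts.
exact: seam_accepts.
Qed.

End Gluing.

Lemma short_labels_contradiction : False.
Proof.
have [h h_incr [c h_c]] := homogeneous_labels.
have [i [j [/andP[lt_ij lt_jr] same_sig]]] := equal_signatures c.
exact: (glued_cycle_contradiction h_incr h_c lt_ij lt_jr same_sig).
Qed.

End LowerBound.

Lemma long_label_exists S (s0 : S) t (P : prover S) (A : verifier S) n L :
  0 < t -> tPLS_acyclic t P A ->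
  4 * t * (#|{ffun 'I_(2 * t) -> {bseq L of bool}}|).+1 <= n.+1 ->
  exists G v, [/\ nv G = n.+1, well_formed G, acyclic G & L < size (P G v)].
Proof.
move=> t_gt0 PA blocks_fit; apply: NNPP => no_long.
apply: (short_labels_contradiction s0 t_gt0 PA (ltnSn _) blocks_fit) => G nvG wf ac v.
by rewrite leqNgt; apply/negP => long; apply: no_long; exists G, v.
Qed.

Lemma card_bseq_le (T : finType) L : 0 < #|T| -> #|{bseq L of T}| <= L.+1 * #|T| ^ L.
Proof.
move=> T_gt0; rewrite card_bseq -[L.+1 in X in _ <= X]card_ord -sum_nat_const.
by apply: leq_sum => i _; rewrite leq_pexp2l // -ltnS.
Qed.

Lemma signatures_fit t n : 0 < t -> 32 * t * t < n ->
  4 * t * (#|{ffun 'I_(2 * t) -> {bseq trunc_log 2 n %/ (8 * t) of bool}}|).+1 <= n.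
Proof.
move=> t_gt0 n_gt; set L := trunc_log 2 n %/ (8 * t); set B := 2 ^ (4 * t * L).
have card_le : #|{ffun 'I_(2 * t) -> {bseq L of bool}}| <= B.
  have bseq_le : #|{bseq L of bool}| <= 2 ^ (2 * L).
    apply: leq_trans (@card_bseq_le bool L _) _; first by rewrite card_bool.
    by rewrite card_bool mul2n -addnn expnD leq_mul2r ltn_expl ?orbT.
  rewrite card_ffun card_ord /B; apply: leq_trans (_ : _ <= (2 ^ (2 * L)) ^ (2 * t)) _.
    by rewrite leq_exp2r ?muln_gt0.
  by rewrite -expnM; have -> : 2 * L * (2 * t) = 4 * t * L by lia.
have BB_le : B * B <= n.
  apply: leq_trans (trunc_logP (leqnn 2) _); last by lia.
  rewrite /B -expnD leq_pexp2l //; have := leq_divM (trunc_log 2 n) (8 * t).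
  by rewrite -/L; lia.
have B_gt0 : 0 < B by rewrite expn_gt0.
apply: leq_trans (_ : 4 * t * B.+1 <= n); first by rewrite leq_mul2l ltnS card_le orbT.
case: (leqP (8 * t) B) => B_8t.
  have : 8 * t * B <= B * B by rewrite leq_mul2r B_8t orbT.
  have : t <= t * B by rewrite leq_pmulr.
  lia.
have : 4 * t * B.+1 <= 4 * t * (8 * t) by rewrite leq_mul2l B_8t orbT.
lia.
Qed.

Theorem theorem3 (S : Type) (hS : inhabited S) :
  exists c : nat, 0 < c /\
  forall t : nat, 0 < t ->
  forall (P : prover S) (A : verifier S), tPLS_acyclic t P A ->
  exists N : nat, forall n : nat, N <= n ->
  exists G : config S,
    [/\ nv G = n, well_formed G, acyclic G &
        exists v : 'I_(nv G), trunc_log 2 n <= c * t * size (P G v)].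
Proof.
case: hS => s0; exists 8; split => // t t_gt0 P A PA.
exists (32 * t * t).+1 => -[//|n] n_gt.
have [G [v [nvG wf ac long]]] := long_label_exists s0 t_gt0 PA (signatures_fit t_gt0 n_gt).
exists G; split => //; exists v.
by move: long; rewrite ltn_divLR ?muln_gt0 //; lia.
Qed.
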